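(* For all integers $n$ and $\alpha$ with $n<\alpha\le 2^{n-1}+1$, there exists a minimal $n$-state nondeterministic finite automaton accepting an infix-closed language whose equivalent minimal deterministic finite automaton has exactly $\alpha$ states. Moreover, if a minimal $n$-state nondeterministic finite automaton accepts an infix-closed language whose equivalent minimal deterministic finite automaton has exactly $n$ states, then $n=1$.
   Context: NFAs have a single initial state and a transition function $\delta:Q\times\Sigma\to 2^Q$ that may map to the empty set (no sink state is needed or counted); DFAs are complete, so a sink state is counted. A minimal $n$-state NFA is an NFA with $n$ states such that no NFA with fewer states accepts the same language. A language $L\subseteq\Sigma^*$ is infix-closed if $xyz\in L$ implies $y\in L$ for all $x,y,z\in\Sigma^*$. *)

From mathcomp Require Import all_boot.
Set Implicit Arguments. Unset Strict Implicit. Unset Printing Implicit Defensive.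

Definition lang (A : finType) := seq A -> bool.

Definition infix_closed (A : finType) (L : lang A) : Prop :=
  forall x y z : seq A, L (x ++ y ++ z) -> L y.

Record nfa (A : finType) := NFA {
  nfa_state : finType;
  nfa_init : nfa_state;
  nfa_final : {set nfa_state};
  nfa_trans : nfa_state -> A -> {set nfa_state} }.

Fixpoint nfa_run (A : finType) (N : nfa A) (X : {set nfa_state N}) (w : seq A)
  : {set nfa_state N} :=
  match w with
  | [::] => X
  | a :: w' => @nfa_run A N (\bigcup_(q in X) @nfa_trans A N q a) w'
  end.

Definition nfa_lang (A : finType) (N : nfa A) : lang A :=
  fun w => [exists q in @nfa_run A N [set nfa_init N] w, q \in nfa_final N].

Definition nfa_size (A : finType) (N : nfa A) : nat := #|nfa_state N|.

Definition nfa_minimal (A : finType) (N : nfa A) : Prop :=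
  forall M : nfa A, (forall w, nfa_lang M w = nfa_lang N w) ->
    nfa_size N <= nfa_size M.

(* Complete DFA (a sink state, if any, is counted among the states). *)
Record dfa (A : finType) := DFA {
  dfa_state : finType;
  dfa_init : dfa_state;
  dfa_final : {set dfa_state};
  dfa_trans : dfa_state -> A -> dfa_state }.

Definition dfa_lang (A : finType) (D : dfa A) : lang A :=
  fun w => foldl (@dfa_trans A D) (dfa_init D) w \in dfa_final D.

Definition dfa_size (A : finType) (D : dfa A) : nat := #|dfa_state D|.

Definition min_dfa_size (A : finType) (L : lang A) (k : nat) : Prop :=
  (exists D : dfa A, dfa_size D = k /\ forall w, dfa_lang D w = L w) /\
  (forall D : dfa A, (forall w, dfa_lang D w = L w) -> k <= dfa_size D).

(* Upper bound: given a family F of nonempty subsets of {0, ..., n-2} that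
   contains every singleton, take a hub state and n - 1 leaf states; the
   letter T in F leads from the hub to the leaves in T, and the letter j loops
   at the hub and at leaf j.  The language is infix-closed, its subset
   automaton reaches exactly the hub, a sink and the sets of F, which are
   pairwise distinguishable, so the minimal DFA has #|F| + 2 states; the pairs
   ([{i}], [i]) together with ([], [{i0}]) form a fooling set of size n.  As
   #|F| can be any number in [n - 1, 2^(n-1) - 1], every alpha is reached.

   Lower bound: in an infix-closed language that is neither empty nor
   universal, every rejected word leads the DFA to a dead state, and deleting
   that state leaves an NFA with one state fewer than the DFA. *)
From mathcomp Require Import all_boot zify.
From Stdlib Require Import Classical.
Set Implicit Arguments. Unset Strict Implicit. Unset Printing Implicit Defensive.

Lemma exists_subset_card (T : finType) (A B : {set T}) k :
  A \subset B -> #|A| <= k <= #|B| ->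
  exists C : {set T}, [/\ A \subset C, C \subset B & #|C| = k].
Proof.
move=> AB /andP[Ak kB].
have kBA : k - #|A| <= #|B :\: A| by rewrite cardsD (setIidPr AB); lia.
pose C0 := [set x in take (k - #|A|) (enum (B :\: A))].
have C0BA : C0 \subset B :\: A.
  by apply/subsetP => x; rewrite inE => /mem_take; rewrite mem_enum.
have cardC0 : #|C0| = k - #|A|.
  by rewrite cardsE (card_uniqP _) ?take_uniq ?enum_uniq // size_takel -?cardE.
exists (A :|: C0); split; first exact: subsetUl.
  by rewrite subUset AB (subset_trans C0BA) ?subsetDl.
have AC0 : A :&: C0 = set0.
  apply/setP => x; rewrite in_setI in_set0.
  by apply/negbTE/andP => -[xA /(subsetP C0BA)]; rewrite inE xA.
by rewrite cardsU AC0 cards0 cardC0; lia.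
Qed.

Lemma exists_family_with_singletons m k : m <= k < 2 ^ m ->
  exists F : {set {set 'I_m}},
    [/\ #|F| = k, set0 \notin F & forall i, [set i] \in F].
Proof.
move=> /andP[mk k2m].
have singleton_sub : [set [set i] | i : 'I_m] \subset [set~ set0].
  apply/subsetP => _ /imsetP[i _ ->]; rewrite !inE.
  by apply/set0Pn; exists i; rewrite set11.
have card_singletons : #|[set [set i] | i : 'I_m]| = m.
  by rewrite card_imset ?card_ord //; exact: set1_inj.
have card_nonempty : #|[set~ (set0 : {set 'I_m})]| = (2 ^ m).-1.
  by rewrite cardsC1 -cardsT -powersetT card_powerset cardsT card_ord.
have [|F [sF Fne cardF]] := exists_subset_card (k := k) singleton_sub.
  by rewrite card_singletons card_nonempty mk /=; lia.
exists F; split => // [|i].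
  by apply: contraT => /negPn /(subsetP Fne); rewrite !inE eqxx.
by apply: (subsetP sF); exact: imset_f.
Qed.

Section NFA.
Variable A : finType.
Implicit Types N : nfa A.

Lemma nfa_run_cat N (X : {set nfa_state N}) u v :
  nfa_run X (u ++ v) = nfa_run (nfa_run X u) v.
Proof. by elim: u X => //= a u IH X. Qed.

Lemma nfa_runP N (X : {set nfa_state N}) v x :
  reflect (exists2 q, q \in X & x \in nfa_run [set q] v) (x \in nfa_run X v).
Proof.
elim: v X x => [|a v IH] X x /=.
  apply: (iffP idP) => [xX|[q qX]]; first by exists x; rewrite ?set11.
  by rewrite inE => /eqP ->.
apply: (iffP (IH _ _)) => [[p /bigcupP[q qX pq] xp]|[q qX]].
  by exists q => //; rewrite big_set1; apply/IH; exists p.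
rewrite big_set1 => /IH[p pq xp]; exists p => //; by apply/bigcupP; exists q.
Qed.

Lemma nfa_run_subset N (X Y : {set nfa_state N}) v :
  X \subset Y -> nfa_run X v \subset nfa_run Y v.
Proof.
move=> /subsetP XY; apply/subsetP => x /nfa_runP[q /XY qY xq].
by apply/nfa_runP; exists q.
Qed.

Lemma nfa_lang_cat N u v :
  nfa_lang N (u ++ v) =
  [exists s in nfa_run [set nfa_init N] u,
     [exists q in nfa_run [set s] v, q \in nfa_final N]].
Proof.
rewrite /nfa_lang nfa_run_cat.
apply/existsP/existsP => [[q /andP[/nfa_runP[s sX qs] qF]]|[s /andP[sX /existsP[q /andP[qs qF]]]]].
  by exists s; rewrite sX; apply/existsP; exists q; rewrite qs.
by exists q; rewrite qF andbT; apply/nfa_runP; exists s.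
Qed.

(* A state through which x p ++ y p is accepted cannot serve another index,
   by the crossing condition. *)
Lemma fooling_set_leq_nfa_size N (I : finType) (x y : I -> seq A) :
  (forall p, nfa_lang N (x p ++ y p)) ->
  (forall p q, p != q -> ~~ (nfa_lang N (x p ++ y q) && nfa_lang N (x q ++ y p))) ->
  #|I| <= nfa_size N.
Proof.
move=> acc fool.
have mid p : exists s, (s \in nfa_run [set nfa_init N] (x p)) &&
    [exists q in nfa_run [set s] (y p), q \in nfa_final N].
  by have := acc p; rewrite nfa_lang_cat => /existsP.
pose f p := xchoose (mid p).
apply: (leq_card f) => p q fpq; apply/eqP; apply: contraT => /fool /negbTE <-.
have /andP[xp yp] := xchooseP (mid p); have /andP[xq yq] := xchooseP (mid q).
rewrite !nfa_lang_cat; apply/andP; split; apply/existsP.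
  by exists (f p); rewrite xp /= fpq.
by exists (f q); rewrite xq /= -fpq.
Qed.

Definition nfa_const (b : bool) : nfa A :=
  @NFA A unit tt (if b then setT else set0) (fun _ _ => setT).

Lemma nfa_const_lang b w : nfa_lang (nfa_const b) w = b.
Proof.
have run (X : {set unit}) : tt \in X -> tt \in @nfa_run A (nfa_const b) X w.
  elim: w X => //= a w IH X tX; apply: IH; apply/bigcupP; by exists tt; rewrite ?inE.
rewrite /nfa_lang; case: b run => run /=; apply/existsP.
  by exists tt; rewrite inE andbT run ?set11.
by case=> q; rewrite inE andbF.
Qed.

Lemma nfa_minimal_const N b :
  nfa_minimal N -> (forall w, nfa_lang N w = b) -> nfa_size N = 1.
Proof.
move=> minN constN; apply/eqP; rewrite eqn_leq; apply/andP; split.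
  have := minN (nfa_const b); rewrite /nfa_size card_unit; apply=> w.
  by rewrite nfa_const_lang.
by apply/card_gt0P; exists (nfa_init N).
Qed.

End NFA.

Arguments nfa_runP {A N X v x}.

Definition dfa_accept (A : finType) (D : dfa A) (s : dfa_state D) (v : seq A) :=
  foldl (@dfa_trans A D) s v \in dfa_final D.

Lemma dfa_size_leq (A : finType) (D D' : dfa A) (reach : dfa_state D -> seq A) :
  (forall s, foldl (@dfa_trans A D) (dfa_init D) (reach s) = s) ->
  (forall s t : dfa_state D, (forall v, dfa_accept s v = dfa_accept t v) -> s = t) ->
  (forall w, dfa_lang D' w = dfa_lang D w) ->
  dfa_size D <= dfa_size D'.
Proof.
move=> reachK dist langD'.
pose f s := foldl (@dfa_trans A D') (dfa_init D') (reach s).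
apply: (leq_card f) => s t fst; apply: dist => v.
have acc z : dfa_accept z v = dfa_lang D' (reach z ++ v).
  by rewrite langD' /dfa_lang foldl_cat reachK.
by rewrite !acc /dfa_lang !foldl_cat -/(f s) -/(f t) fst.
Qed.

Section DeadStateRemoval.
Variables (A : finType) (D : dfa A) (q : dfa_state D).
Hypothesis q_dead : forall v, ~~ dfa_accept q v.
Hypothesis init_alive : dfa_init D != q.

Definition live_state := {s : dfa_state D | s != q}.

Definition dfa_drop_nfa : nfa A :=
  @NFA A live_state (Sub (dfa_init D) init_alive)
    [set s : live_state | val s \in dfa_final D]
    (fun s a => [set s' : live_state | val s' == dfa_trans (val s) a]).

Lemma dfa_drop_run_val (s x : live_state) u :
  x \in nfa_run (N := dfa_drop_nfa) [set s] u -> val x = foldl (@dfa_trans A D) (val s) u.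
Proof.
elim: u s => [|a u IH] s /=; first by rewrite inE => /eqP ->.
by rewrite big_set1 => /(nfa_runP (N := dfa_drop_nfa))[p]; rewrite inE => /eqP <- /IH.
Qed.

Lemma dfa_drop_run_accept (s : live_state) u : dfa_accept (val s) u ->
  exists2 x, x \in nfa_run (N := dfa_drop_nfa) [set s] u &
             val x = foldl (@dfa_trans A D) (val s) u.
Proof.
elim: u s => [|a u IH] s acc /=; first by exists s; rewrite ?set11.
have alive : dfa_trans (val s) a != q.
  by apply: contraTneq acc => qa; rewrite /dfa_accept /= qa q_dead.
have [x xr xv] := IH (Sub (dfa_trans (val s) a) alive : live_state) acc.
exists x => //; rewrite big_set1; apply: subsetP xr; apply: nfa_run_subset.
by rewrite sub1set inE.
Qed.

Lemma dfa_drop_lang w : nfa_lang dfa_drop_nfa w = dfa_lang D w.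
Proof.
apply/existsP/idP => [[x /andP[/dfa_drop_run_val xv]]|acc].
  by rewrite inE xv.
have [x xr xv] := @dfa_drop_run_accept (Sub (dfa_init D) init_alive) w acc.
by exists x; rewrite xr inE xv.
Qed.

Lemma dfa_drop_size : nfa_size dfa_drop_nfa = (dfa_size D).-1.
Proof. by rewrite /nfa_size card_sig cardC1. Qed.

End DeadStateRemoval.

Lemma infix_closed_equal_min_sizes (A : finType) (N : nfa A) :
  nfa_minimal N -> infix_closed (nfa_lang N) ->
  min_dfa_size (nfa_lang N) (nfa_size N) -> nfa_size N = 1.
Proof.
move=> minN infixN [[D [sizeD langD]] _].
have [[w1 w1N]|all_acc] := classic (exists w1, ~~ nfa_lang N w1); last first.
  apply: (nfa_minimal_const (b := true) minN) => w.
  by apply: contra_notT all_acc => wN; exists w.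
have [eps_acc|eps_rej] := boolP (nfa_lang N [::]); last first.
  apply: (nfa_minimal_const (b := false) minN) => w; apply: contraNF eps_rej.
  by move=> wL; apply: (infixN w [::] [::]); rewrite /= cats0.
pose q := foldl (@dfa_trans A D) (dfa_init D) w1.
have q_dead v : ~~ dfa_accept q v.
  rewrite /dfa_accept -foldl_cat -/(dfa_lang D _) langD.
  by apply: contra w1N => /(infixN [::] w1 v).
have init_alive : dfa_init D != q.
  by apply: contraTneq eps_acc => eq_q; move: (q_dead [::]); rewrite -eq_q -langD.
have langM w : nfa_lang (dfa_drop_nfa init_alive) w = nfa_lang N w.
  by rewrite dfa_drop_lang.
have := minN _ langM; rewrite dfa_drop_size sizeD.
have : 0 < nfa_size N by apply/card_gt0P; exists (nfa_init N).
lia.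
Qed.

Section SetFamilyAutomata.
Variables (m : nat) (F : {set {set 'I_m}}).
Hypothesis set0_notin_F : set0 \notin F.
Hypothesis set1_in_F : forall i, [set i] \in F.

(* [inl T] is the letter T, [inr j] the letter j; the NFA state [None] is the hub. *)
Definition fam_letter := ({set 'I_m} + 'I_m)%type.

Definition fam_ntrans (p : option 'I_m) (a : fam_letter) : {set option 'I_m} :=
  match p, a with
  | None, inl T => if T \in F then Some @: T else set0
  | None, inr _ => [set None]
  | Some _, inl _ => set0
  | Some i, inr j => if j == i then [set Some i] else set0
  end.

Definition fam_nfa : nfa fam_letter := @NFA fam_letter (option 'I_m) None setT fam_ntrans.

(* DFA states: [None] is the sink, [Some None] the hub, [Some (Some T)] the
   subset T of leaves, for T in F. *)
Definition fam_dstate := option (option {T : {set 'I_m} | T \in F}).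

Definition fam_enter (T : {set 'I_m}) : fam_dstate :=
  if insub T is Some u then Some (Some u) else None.

Definition fam_dtrans (s : fam_dstate) (a : fam_letter) : fam_dstate :=
  match s, a with
  | None, _ => None
  | Some None, inl T => fam_enter T
  | Some None, inr _ => Some None
  | Some (Some _), inl _ => None
  | Some (Some u), inr j => if j \in val u then fam_enter [set j] else None
  end.

Definition fam_dfa : dfa fam_letter :=
  @DFA fam_letter fam_dstate (Some None) [set s | s != None] fam_dtrans.

Definition fam_subset (s : fam_dstate) : {set option 'I_m} :=
  match s with
  | None => set0
  | Some None => [set None]
  | Some (Some u) => Some @: val u
  end.

Lemma fam_enter_notin T : T \notin F -> fam_enter T = None.
Proof. by move=> TF; rewrite /fam_enter; case: insubP => // u; rewrite (negbTE TF). Qed.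

Lemma fam_enter_in T (TF : T \in F) : fam_enter T = Some (Some (Sub T TF)).
Proof. by rewrite /fam_enter insubT. Qed.

Lemma fam_subset_enter T : fam_subset (fam_enter T) = if T \in F then Some @: T else set0.
Proof. by case: ifP => TF; [rewrite (fam_enter_in TF) | rewrite fam_enter_notin ?TF]. Qed.

Lemma fam_subset_step s a :
  \bigcup_(p in fam_subset s) fam_ntrans p a = fam_subset (fam_dtrans s a).
Proof.
case: s => [[u|]|] /=; last by rewrite big_set0.
  case: a => [T|j] /=.
    by apply/setP => x; rewrite in_set0; apply/bigcupP => -[_ /imsetP[i _ ->]]; rewrite /= inE.
  apply/setP => x; case: ifPn => ju.
    rewrite fam_subset_enter set1_in_F imset_set1 inE.
    apply/bigcupP/eqP => [[_ /imsetP[i iu ->]] /=|->].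
      by case: eqP => [->|_]; rewrite inE // => /eqP.
    by exists (Some j); [apply: imset_f | rewrite /= eqxx set11].
  rewrite in_set0; apply/bigcupP => -[_ /imsetP[i iu ->]] /=.
  by case: eqP => [ji|]; [move: ju; rewrite ji iu | rewrite inE].
by rewrite big_set1; case: a => [T|j] //=; rewrite fam_subset_enter.
Qed.

Lemma fam_nfa_run s w :
  nfa_run (N := fam_nfa) (fam_subset s) w = fam_subset (foldl fam_dtrans s w).
Proof. by elim: w s => //= a w IH s; rewrite fam_subset_step IH. Qed.

Lemma fam_subset_eq0 s : (fam_subset s != set0) = (s != None).
Proof.
case: s => [[u|]|] /=; last by rewrite eqxx.
  by rewrite imset_eq0; apply: contraNneq set0_notin_F => <-; exact: valP u.
by apply/set0Pn; exists None; rewrite set11.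
Qed.

Lemma fam_nfa_lang w : nfa_lang fam_nfa w = (foldl fam_dtrans (Some None) w != None).
Proof.
rewrite /nfa_lang -fam_subset_eq0 -fam_nfa_run /=.
by apply/existsP/set0Pn => -[p]; [case/andP => pr _ | move=> pr]; exists p; rewrite ?inE ?pr.
Qed.

Lemma fam_dfa_lang w : dfa_lang fam_dfa w = nfa_lang fam_nfa w.
Proof. by rewrite fam_nfa_lang /dfa_lang inE. Qed.

Lemma fam_dtrans_sink w : foldl fam_dtrans None w = None.
Proof. by elim: w. Qed.

Lemma fam_hub_accepts w s : s != None -> foldl fam_dtrans s w != None ->
  foldl fam_dtrans (Some None) w != None.
Proof.
elim: w s => [|a w IH] s //= sN acc.
have aN : fam_dtrans s a != None by apply: contraNneq acc => ->; rewrite fam_dtrans_sink.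
by case: a acc aN => [T|j] acc aN; [case: s sN acc aN => [[u|]|] | exact: IH aN acc].
Qed.

Lemma fam_infix_closed : infix_closed (nfa_lang fam_nfa).
Proof.
move=> x y z; rewrite !fam_nfa_lang foldl_cat => acc.
have xN : foldl fam_dtrans (Some None) x != None.
  by apply: contraNneq acc => ->; rewrite !fam_dtrans_sink.
have := fam_hub_accepts xN acc; rewrite foldl_cat.
by apply: contraNneq => ->; rewrite fam_dtrans_sink.
Qed.

Lemma fam_nfa_size : nfa_size fam_nfa = m.+1.
Proof. by rewrite /nfa_size card_option card_ord. Qed.

Lemma fam_nfa_minimal : nfa_minimal fam_nfa.
Proof.
move=> M langM.
pose x (p : option 'I_m) : seq fam_letter := if p is Some i then [:: inl [set i]] else [::].
pose y (p : option 'I_m) : seq fam_letter :=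
  if p is Some i then [:: inr i]
  else if [pick i : 'I_m] is Some i0 then [:: inl [set i0]] else [::].
have <- : #|{: option 'I_m}| = nfa_size fam_nfa by rewrite fam_nfa_size card_option card_ord.
apply: (fooling_set_leq_nfa_size (x := x) (y := y)) => [p|p q].
  rewrite langM fam_nfa_lang; case: p => [i|] /=.
    by rewrite (fam_enter_in (set1_in_F i)) /= inE eqxx (fam_enter_in (set1_in_F i)).
  by case: pickP => // i0 _ /=; rewrite (fam_enter_in (set1_in_F i0)).
rewrite !langM !fam_nfa_lang.
case: p => [i|]; case: q => [j|] // ne /=.
- rewrite (fam_enter_in (set1_in_F i)) (fam_enter_in (set1_in_F j)) /= !inE.
  have ij : (i == j) = false by apply/negbTE; apply: contraNneq ne => ->.
  by rewrite [j == i]eq_sym ij.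
- by case: pickP => [i0 _|none]; [rewrite /= (fam_enter_in (set1_in_F i)) | have := none i].
- by case: pickP => [i0 _|none]; [rewrite /= (fam_enter_in (set1_in_F j)) | have := none j].
Qed.

Lemma fam_dfa_size : dfa_size fam_dfa = #|F|.+2.
Proof. by rewrite /dfa_size !card_option card_sig. Qed.

Definition fam_reach (s : fam_dstate) : seq fam_letter :=
  match s with
  | None => [:: inl set0]
  | Some None => [::]
  | Some (Some u) => [:: inl (val u)]
  end.

Lemma fam_reachK s : foldl fam_dtrans (Some None) (fam_reach s) = s.
Proof. by case: s => [[u|]|] /=; [rewrite /fam_enter valK | | rewrite fam_enter_notin]. Qed.

Lemma fam_dstate_dist s t :
  (forall v, dfa_accept (D := fam_dfa) s v = dfa_accept (D := fam_dfa) t v) -> s = t.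
Proof.
have acc s' v : dfa_accept (D := fam_dfa) s' v = (foldl fam_dtrans s' v != None).
  by rewrite /dfa_accept inE.
move=> st; have := st [::]; rewrite !acc /=.
case: s t st => [[u|]|] [[u'|]|] // st _.
- congr (Some (Some _)); apply: val_inj; apply/setP => j.
  have := st [:: inr j]; rewrite !acc /=.
  by case: (j \in val u); case: (j \in val u'); rewrite // (fam_enter_in (set1_in_F j)).
- by have := st [:: inl (val u)]; rewrite !acc /= /fam_enter valK.
- by have := st [:: inl (val u')]; rewrite !acc /= /fam_enter valK.
Qed.

Lemma fam_min_dfa_size : min_dfa_size (nfa_lang fam_nfa) #|F|.+2.
Proof.
split; first by exists fam_dfa; split; [exact: fam_dfa_size | exact: fam_dfa_lang].
move=> D' langD'; rewrite -fam_dfa_size.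
apply: (@dfa_size_leq _ fam_dfa D' fam_reach fam_reachK fam_dstate_dist) => w.
by rewrite langD' fam_dfa_lang.
Qed.

End SetFamilyAutomata.

Theorem mainTheorem7 :
  (forall n alpha : nat, 1 <= n -> n < alpha -> alpha <= 2 ^ (n - 1) + 1 ->
     exists (A : finType) (N : nfa A),
       [/\ nfa_size N = n, nfa_minimal N, infix_closed (nfa_lang N)
         & min_dfa_size (nfa_lang N) alpha]) /\
  (forall (A : finType) (N : nfa A) (n : nat),
     nfa_size N = n -> nfa_minimal N -> infix_closed (nfa_lang N) ->
     min_dfa_size (nfa_lang N) n -> n = 1).
Proof.
split=> [n alpha n_gt0 n_lt_alpha alpha_le|A N n <-]; last first.
  exact: infix_closed_equal_min_sizes.
have [|F [cardF F0 F1]] := @exists_family_with_singletons (n - 1) (alpha - 2).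
  have : 0 < 2 ^ (n - 1) by rewrite expn_gt0.
  by move: alpha_le; lia.
exists (fam_letter (n - 1)), (fam_nfa F); split.
- by rewrite fam_nfa_size; lia.
- exact: fam_nfa_minimal.
- exact: fam_infix_closed.
- have -> : alpha = #|F|.+2 by rewrite cardF; lia.
  exact: fam_min_dfa_size.
Qed.
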